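(* Let $\Lambda:\mathcal{B}(\mathcal{H}_d)\to\mathcal{B}(\mathcal{H}_d)$ be a quantum operation with $\Lambda^\dagger[I]\neq 0$. Let $\Pi_0$ be the projector onto the kernel of $\Lambda^\dagger[I]$, let $(\Lambda^\dagger[I])^{-1/2}$ be defined via the Moore–Penrose inverse, and let $\xi$ be an arbitrary density operator in the set $\Lambda_{\mathcal{D}}[\mathcal{D}(\mathcal{H}_d)]=\{\Lambda_{\mathcal D}[\rho]:\rho\in\mathcal{D}(\mathcal{H}_d),\ \mathrm{tr}\Lambda[\rho]\neq0\}$. Then the map $$\Phi_\Lambda[\rho]=\Lambda\big[(\Lambda^\dagger[I])^{-1/2}\rho(\Lambda^\dagger[I])^{-1/2}\big]+\mathrm{tr}[\rho\,\Pi_0]\,\xi$$ is a quantum channel and $\Lambda_{\mathcal{D}}[\mathcal{D}(\mathcal{H}_d)]=\Phi_\Lambda[\mathcal{D}(\mathcal{H}_d)]$.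
   Context: $\mathcal{H}_d$ is a Hilbert space of finite dimension $d>1$ and $\mathcal{D}(\mathcal{H}_d)$ is the set of density operators on it. A quantum operation is a completely positive linear map $\Lambda$ on $\mathcal{B}(\mathcal{H}_d)$ with $\Lambda^\dagger[I]\le I$, where $\Lambda^\dagger$ is the dual map ($\mathrm{tr}[\Lambda[X]Y]=\mathrm{tr}[X\Lambda^\dagger[Y]]$). A quantum channel is a completely positive trace preserving map. The normalized (nonlinear) map is $\Lambda_{\mathcal{D}}[\rho]=\Lambda[\rho]/\mathrm{tr}\big[\Lambda[\rho]\big]$, defined for those $\rho\in\mathcal{D}(\mathcal{H}_d)$ with $\mathrm{tr}[\Lambda[\rho]]\neq 0$. *)

From HB Require Import structures.
From mathcomp Require Import all_boot all_order all_algebra.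
Set Implicit Arguments. Unset Strict Implicit. Unset Printing Implicit Defensive.
Import Order.TTheory GRing.Theory Num.Theory Num.Def.
Local Open Scope ring_scope.
Local Open Scope sesquilinear_scope.

Section QDefs.
Variable C : numClosedFieldType.

Definition adjmx m n (A : 'M[C]_(m, n)) : 'M[C]_(n, m) := A ^t conjC.

Definition psdmx n (A : 'M[C]_n) : Prop :=
  forall v : 'rV[C]_n, 0 <= (v *m A *m adjmx v) 0 0.

Definition loewner_le n (A B : 'M[C]_n) : Prop := psdmx (B - A).

Definition density n (rho : 'M[C]_n) : Prop := psdmx rho /\ \tr rho = 1.

Definition linmap d (L : 'M[C]_d -> 'M[C]_d) : Prop :=
  forall (a : C) (X Y : 'M[C]_d), L (a *: X + Y) = a *: L X + L Y.

(* positivity of an element of M_n (x) M_d, given as an n x n block matrix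
   X with blocks X i j in M_d *)
Definition psd_block n d (X : 'I_n -> 'I_n -> 'M[C]_d) : Prop :=
  forall v : 'I_n -> 'rV[C]_d,
    0 <= \sum_(i < n) \sum_(j < n) (v i *m X i j *m adjmx (v j)) 0 0.

(* complete positivity: id_n (x) L is positive for every n *)
Definition completely_positive d (L : 'M[C]_d -> 'M[C]_d) : Prop :=
  forall (n : nat) (X : 'I_n -> 'I_n -> 'M[C]_d),
    psd_block X -> psd_block (fun i j => L (X i j)).

Definition is_dual d (L Ld : 'M[C]_d -> 'M[C]_d) : Prop :=
  forall X Y : 'M[C]_d, \tr (L X *m Y) = \tr (X *m Ld Y).

Definition quantum_operation d (L Ld : 'M[C]_d -> 'M[C]_d) : Prop :=
  [/\ linmap L, completely_positive L, is_dual L Ld & loewner_le (Ld 1%:M) 1%:M].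

Definition quantum_channel d (L : 'M[C]_d -> 'M[C]_d) : Prop :=
  [/\ linmap L, completely_positive L & forall X, \tr (L X) = \tr X].

Definition normalized d (L : 'M[C]_d -> 'M[C]_d) (rho : 'M[C]_d) : 'M[C]_d :=
  (\tr (L rho))^-1 *: L rho.

Definition normalized_image d (L : 'M[C]_d -> 'M[C]_d) (xi : 'M[C]_d) : Prop :=
  exists rho, [/\ density rho, \tr (L rho) != 0 & xi = normalized L rho].

(* functional calculus for a normal (here: Hermitian) matrix via the spectral
   decomposition A = P^-1 diag(D) P of mathcomp's spectral.v *)
Definition mxfun n (f : C -> C) (A : 'M[C]_n) : 'M[C]_n :=
  invmx (spectralmx A) *m diag_mx (map_mx f (spectral_diag A)) *m spectralmx A.

(* (A^+)^{1/2}: inverse square root through the Moore-Penrose inverse,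
   i.e. eigenvalue x |-> x^{-1/2} if x <> 0 and 0 if x = 0 *)
Definition mp_invsqrt n (A : 'M[C]_n) : 'M[C]_n :=
  mxfun (fun x => if x == 0 then 0 else (sqrtC x)^-1) A.

Definition ker_proj n (A : 'M[C]_n) : 'M[C]_n := proj_ortho (kermx A).

Definition Phi d (L Ld : 'M[C]_d -> 'M[C]_d) (xi : 'M[C]_d) (rho : 'M[C]_d)
  : 'M[C]_d :=
  L (mp_invsqrt (Ld 1%:M) *m rho *m mp_invsqrt (Ld 1%:M))
  + \tr (rho *m ker_proj (Ld 1%:M)) *: xi.

End QDefs.

Set Warnings "-notation-overridden,-ambiguous-paths".
From HB Require Import structures.
From mathcomp Require Import all_boot all_order all_algebra.
From mathcomp Require Import ring.
Set Implicit Arguments. Unset Strict Implicit. Unset Printing Implicit Defensive.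
Import Order.TTheory GRing.Theory Num.Theory Num.Def.
Local Open Scope ring_scope.
Local Open Scope sesquilinear_scope.

(* Let A = Λ†[I], which is positive, B = (A⁺)^{1/2} and Π₀ the projector onto
   ker A; the functional calculus gives B A B = I - Π₀.  Hence
   tr Φ[ρ] = tr[ρ B A B] + tr[ρ Π₀] = tr ρ, and Φ is completely positive as the
   sum of Λ[B · B] and X ↦ tr[X Π₀] ξ, whose Kraus operators are built from
   square roots of Π₀ and ξ.
   Since tr Λ[Π₀] = tr[Π₀ A] = 0, Λ[Π₀] = 0, and complete positivity then forces
   Λ[Π₀ Y] = Λ[Y† Π₀] = 0, i.e. Λ[X] = Λ[(I - Π₀) X (I - Π₀)].  Therefore
   Φ[A^{1/2} ρ A^{1/2}] = Λ[ρ], so Λ_D[ρ] = Φ[A^{1/2} ρ A^{1/2} / tr Λ[ρ]].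
   Conversely, writing ξ = Λ[ρ₂] / tr Λ[ρ₂], Φ[ρ] = Λ[B ρ B + c ρ₂] with
   c = tr[ρ Π₀] / tr Λ[ρ₂] ≥ 0 has trace 1, so it is the normalized image of a
   positive operator. *)

Section Adjoint.
Variable C : numClosedFieldType.

Lemma adjmxM m n p (A : 'M[C]_(m, n)) (B : 'M[C]_(n, p)) :
  adjmx (A *m B) = adjmx B *m adjmx A.
Proof. by rewrite /adjmx trmx_mul map_mxM. Qed.

Lemma adjmxK m n (A : 'M[C]_(m, n)) : adjmx (adjmx A) = A.
Proof. exact: trmxCK. Qed.

Lemma adjmxD m n (A B : 'M[C]_(m, n)) : adjmx (A + B) = adjmx A + adjmx B.
Proof. by apply/matrixP=> i j; rewrite !mxE rmorphD. Qed.

Lemma adjmxZ m n (a : C) (A : 'M[C]_(m, n)) : adjmx (a *: A) = a^* *: adjmx A.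
Proof. by apply/matrixP=> i j; rewrite !mxE rmorphM. Qed.

Lemma adjmx0 m n : adjmx (0 : 'M[C]_(m, n)) = 0.
Proof. by apply/matrixP=> i j; rewrite !mxE rmorph0. Qed.

Lemma adjmx1 n : adjmx (1%:M : 'M[C]_n) = 1%:M.
Proof. by apply/matrixP=> i j; rewrite /adjmx !mxE conjC_nat eq_sym. Qed.

Lemma adjmx_sum m n I (r : seq I) (P : pred I) (F : I -> 'M[C]_(m, n)) :
  adjmx (\sum_(i <- r | P i) F i) = \sum_(i <- r | P i) adjmx (F i).
Proof.
apply: (big_ind2 (fun x y => adjmx x = y)) => [|x1 x2 y1 y2 <- <-|//].
  exact: adjmx0.
by rewrite adjmxD.
Qed.

Lemma adjmx_diag n (D : 'rV[C]_n) : adjmx (diag_mx D) = diag_mx (map_mx conjC D).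
Proof.
apply/matrixP=> i j; rewrite !mxE eq_sym.
by case: eqP => [->|_]; rewrite ?mulr1n ?mulr0n ?rmorph0.
Qed.

End Adjoint.

Section SesquilinearForms.
Variable C : numClosedFieldType.

Lemma form_delta n (M : 'M[C]_n) i j :
  (delta_mx (0 : 'I_1) i *m M *m adjmx (delta_mx (0 : 'I_1) j)) 0 0 = M i j.
Proof.
have -> : adjmx (delta_mx (0 : 'I_1) j : 'rV[C]_n) = delta_mx j (0 : 'I_1).
  by apply/matrixP=> a b; rewrite /adjmx !mxE conjC_nat andbC.
by rewrite -rowE -colE !mxE.
Qed.

Lemma form_eq0 n (M : 'M[C]_n) :
  (forall u v : 'rV[C]_n, (u *m M *m adjmx v) 0 0 = 0) -> M = 0.
Proof. by move=> M0; apply/matrixP=> i j; rewrite -form_delta M0 mxE. Qed.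

Lemma formDZ n (M : 'M[C]_n) (u w : 'rV[C]_n) (s : C) :
  ((u + s *: w) *m M *m adjmx (u + s *: w)) 0 0 =
  (u *m M *m adjmx u) 0 0 + s * (w *m M *m adjmx u) 0 0
  + s^* * (u *m M *m adjmx w) 0 0 + s * s^* * (w *m M *m adjmx w) 0 0.
Proof.
rewrite adjmxD adjmxZ !mulmxDl !mulmxDr -!scalemxAl -!scalemxAr !mxE; ring.
Qed.

Lemma real_affine_ge0 (a r : C) :
  (forall t : C, t \is Num.real -> 0 <= a + t * r) -> r = 0.
Proof.
move=> ge0; apply/eqP/negPn/negP => r_neq0.
have a_ge0 : 0 <= a by have := ge0 0 (rpred0 _); rewrite mul0r addr0.
have a_real : a \is Num.real by apply: ger0_real.
have r_real : r \is Num.real.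
  have := ge0 1 (rpred1 _); rewrite mul1r => /ger0_real ar_real.
  by have := rpredB ar_real a_real; rewrite addrC addKr.
have t_real : - (a + 1) / r \is Num.real by rewrite rpredM ?rpredN ?rpredD ?rpred1 ?rpredV.
have := ge0 _ t_real; rewrite mulfVK // opprD addrA subrr add0r.
by rewrite oppr_ge0 ler10.
Qed.

Lemma sesqui_affine_ge0 (a b c : C) :
  (forall s : C, 0 <= a + s * b + s^* * c) -> b = 0 /\ c = 0.
Proof.
move=> ge0.
have bc0 : b + c = 0.
  apply: (@real_affine_ge0 a) => t t_real; have := ge0 t.
  by rewrite (conj_Creal t_real) -addrA -mulrDr.
have ibc0 : 'i * b - 'i * c = 0.
  apply: (@real_affine_ge0 a) => t t_real; have := ge0 (t * 'i).
  rewrite rmorphM /= (conj_Creal t_real) conjCi.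
  by congr (_ <= _); ring.
have bc : b = c.
  apply/eqP; rewrite -subr_eq0; apply/eqP.
  by apply: (mulfI (neq0Ci C)); rewrite mulr0 mulrBr.
have : b *+ 2 == 0 by rewrite mulr2n {2}bc bc0.
by rewrite mulrn_eq0 /= => /eqP b0; rewrite -bc.
Qed.

(* polarization: test with s = 1 and s = 'i *)
Lemma sesqui_quadratic_real (a b c e : C) : a \is Num.real -> e \is Num.real ->
  (forall s, a + s * b + s^* * c + s * s^* * e \is Num.real) -> b^* = c.
Proof.
move=> a_real e_real q_real.
have /CrealP bc_real : b + c \is Num.real.
  have -> : b + c = (a + 1 * b + 1^* * c + 1 * 1^* * e) - a - e.
    by rewrite rmorph1; ring.
  by rewrite !rpredB.
have /CrealP ibc_real : 'i * b - 'i * c \is Num.real.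
  have -> : 'i * b - 'i * c = (a + 'i * b + 'i^* * c + 'i * 'i^* * e) - a - e.
    by rewrite conjCi mulrN -expr2 sqrCi opprK; ring.
  by rewrite !rpredB.
move: bc_real ibc_real; rewrite !rmorphD !rmorphN !rmorphM /= conjCi => E1 E2.
suff : (b^* - c) *+ 2 = 0 by move/eqP; rewrite mulrn_eq0 /= subr_eq0 => /eqP.
have -> : (b^* - c) *+ 2 = (b^* + c^* - (b + c))
   + 'i * (- 'i * b^* + - (- 'i * c^*) - ('i * b - 'i * c))
   + ('i * 'i + 1) * (b^* - c^* + b - c) by ring.
by rewrite E1 E2 -expr2 sqrCi addNr !subrr mul0r mulr0 !addr0.
Qed.

End SesquilinearForms.

Section Psd.
Variables (C : numClosedFieldType) (n : nat).
Implicit Types M : 'M[C]_n.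

Lemma psd_diag_ge0 M i : psdmx M -> 0 <= M i i.
Proof. by move=> psdM; rewrite -form_delta. Qed.

Lemma psd_trace_ge0 M : psdmx M -> 0 <= \tr M.
Proof. by move=> psdM; apply: sumr_ge0 => i _; apply: psd_diag_ge0. Qed.

Lemma psd_herm M : psdmx M -> adjmx M = M.
Proof.
move=> psdM; apply/matrixP=> i j.
rewrite /adjmx !mxE -(form_delta M j i) -(form_delta M i j).
set ei : 'rV[C]_n := delta_mx 0 i; set ej : 'rV[C]_n := delta_mx 0 j.
apply: (@sesqui_quadratic_real _ ((ei *m M *m adjmx ei) 0 0) _ _
                                 ((ej *m M *m adjmx ej) 0 0)).
- exact/ger0_real/psdM.
- exact/ger0_real/psdM.
- by move=> s; rewrite -formDZ; apply/ger0_real/psdM.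
Qed.

Lemma psd_normal M : psdmx M -> M \is normalmx.
Proof. by move=> psdM; apply/normalmxP; rewrite [M ^t*]psd_herm. Qed.

Lemma psd_trace_eq0 M : psdmx M -> \tr M = 0 -> M = 0.
Proof.
move=> psdM /psumr_eq0P trM0.
have diag0 i : M i i = 0 by apply: trM0 => // k _; apply: psd_diag_ge0.
apply/matrixP => i j; rewrite mxE.
pose ei : 'rV[C]_n := delta_mx 0 i; pose ej : 'rV[C]_n := delta_mx 0 j.
suff [_ <-] : (ej *m M *m adjmx ei) 0 0 = 0 /\ (ei *m M *m adjmx ej) 0 0 = 0.
  by rewrite form_delta.
apply: (@sesqui_affine_ge0 _ ((ei *m M *m adjmx ei) 0 0)) => s.
have ejj : (ej *m M *m adjmx ej) 0 0 = 0 by rewrite form_delta.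
by have := psdM (ei + s *: ej); rewrite formDZ ejj mulr0 addr0.
Qed.

Lemma psd_gram m (G : 'M[C]_(m, n)) : psdmx (adjmx G *m G).
Proof.
move=> v; set w := v *m adjmx G.
have -> : v *m (adjmx G *m G) *m adjmx v = w *m adjmx w.
  by rewrite /w adjmxM adjmxK !mulmxA.
by rewrite mxE; apply: sumr_ge0 => k _; rewrite /adjmx !mxE mul_conjC_ge0.
Qed.

Lemma psdD M1 M2 : psdmx M1 -> psdmx M2 -> psdmx (M1 + M2).
Proof. by move=> psd1 psd2 v; rewrite mulmxDr mulmxDl mxE addr_ge0. Qed.

Lemma psdZ (a : C) M : 0 <= a -> psdmx M -> psdmx (a *: M).
Proof. by move=> a_ge0 psdM v; rewrite -scalemxAr -scalemxAl mxE mulr_ge0. Qed.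

Lemma psd_conj (K : 'M[C]_n) M : psdmx M -> psdmx (K *m M *m adjmx K).
Proof. by move=> psdM v; have := psdM (v *m K); rewrite adjmxM !mulmxA. Qed.

End Psd.

Section FunctionalCalculus.
Variables (C : numClosedFieldType) (n : nat) (A : 'M[C]_n).
Local Notation P := (spectralmx A).
Local Notation D := (spectral_diag A).

Lemma spectral_mulmx_adj : P *m adjmx P = 1%:M.
Proof. exact/unitarymxP/spectral_unitarymx. Qed.

Lemma spectral_adj_mulmx : adjmx P *m P = 1%:M.
Proof. by rewrite /adjmx -invmx_unitary ?spectral_unitarymx // mulVmx // spectral_unit. Qed.

Lemma mxfunE f : mxfun f A = adjmx P *m diag_mx (map_mx f D) *m P.
Proof. by rewrite /mxfun invmx_unitary // spectral_unitarymx. Qed.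

Lemma eq_mxfun f g : (forall i, f (D 0 i) = g (D 0 i)) -> mxfun f A = mxfun g A.
Proof.
move=> fg; rewrite /mxfun; congr (_ *m diag_mx _ *m _).
by apply/matrixP => i j; rewrite !mxE ord1 fg.
Qed.

Lemma mxfunM f g : mxfun f A *m mxfun g A = mxfun (fun x => f x * g x) A.
Proof.
rewrite !mxfunE.
have -> : adjmx P *m diag_mx (map_mx f D) *m P *m (adjmx P *m diag_mx (map_mx g D) *m P)
  = adjmx P *m diag_mx (map_mx f D) *m (P *m adjmx P) *m diag_mx (map_mx g D) *m P.
  by rewrite !mulmxA.
rewrite spectral_mulmx_adj mulmx1 -(mulmxA (adjmx P)) mulmx_diag.
congr (_ *m diag_mx _ *m _).
by apply/rowP => j; rewrite !mxE.
Qed.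

Lemma mxfunD f g : mxfun (fun x => f x + g x) A = mxfun f A + mxfun g A.
Proof.
rewrite !mxfunE -mulmxDl -mulmxDr; congr (_ *m _ *m _).
by apply/matrixP => i j; rewrite !mxE mulrnDl.
Qed.

Lemma mxfun_cst c : mxfun (fun=> c) A = c%:M.
Proof.
rewrite mxfunE.
have -> : diag_mx (map_mx (fun=> c) D) = c%:M by apply/matrixP => i j; rewrite !mxE.
by rewrite mul_mx_scalar -scalemxAl spectral_adj_mulmx scalemx1.
Qed.

Lemma mxfun0 : mxfun (fun=> 0) A = 0.
Proof. by rewrite mxfun_cst -scalemx1 scale0r. Qed.

Lemma adjmx_mxfun f : adjmx (mxfun f A) = mxfun (fun x => (f x)^*) A.
Proof.
rewrite !mxfunE !adjmxM adjmxK adjmx_diag mulmxA; congr (_ *m diag_mx _ *m _).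
by apply/matrixP => i j; rewrite !mxE.
Qed.

Lemma mxfun_gram f : mxfun (fun x => (f x)^* * f x) A =
  adjmx (diag_mx (map_mx f D) *m P) *m (diag_mx (map_mx f D) *m P).
Proof.
rewrite mxfunE adjmxM adjmx_diag !mulmxA -(mulmxA _ (diag_mx _) (diag_mx _)).
rewrite mulmx_diag.
by congr (_ *m diag_mx _ *m _); apply/rowP => j; rewrite !mxE.
Qed.

Hypothesis normalA : A \is normalmx.

Lemma mxfun_id : mxfun id A = A.
Proof. by rewrite /mxfun map_mx_id //; apply/esym/orthomx_spectralP. Qed.

Lemma spectral_decomposition : A = adjmx P *m diag_mx D *m P.
Proof. by rewrite -{1}mxfun_id mxfunE map_mx_id. Qed.

Lemma psd_spectral_ge0 : psdmx A -> forall i, 0 <= D 0 i.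
Proof.
move=> psdA i.
have PAP : P *m A *m adjmx P = diag_mx D.
  rewrite [X in _ *m X *m adjmx _]spectral_decomposition.
  by rewrite !mulmxA spectral_mulmx_adj mul1mx -mulmxA spectral_mulmx_adj mulmx1.
have := psdA (row i P); rewrite rowE adjmxM !mulmxA -(mulmxA _ P) -(mulmxA _ (P *m A)).
by rewrite PAP form_delta mxE eqxx mulr1n.
Qed.

Lemma ker_projE : ker_proj A = mxfun (fun x => (x == 0)%:R) A.
Proof.
rewrite /ker_proj.
suff E : P *m proj_ortho (kermx A) = diag_mx (map_mx (fun x => (x == 0)%:R) D) *m P.
  by rewrite mxfunE -mulmxA -E mulmxA spectral_adj_mulmx mul1mx.
apply/row_matrixP => i; rewrite !row_mul row_diag_mx -scalemxAl -rowE !mxE.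
case: eqP => Di.
  rewrite scale1r; apply: proj_ortho_id; apply/sub_kermxP.
  rewrite [X in _ *m X]spectral_decomposition !mulmxA -row_mul spectral_mulmx_adj.
  by rewrite row1 -rowE row_diag_mx Di scale0r mul0mx.
rewrite scale0r; apply: proj_ortho_0; apply/orthomx1P.
change (row i P *m adjmx (kermx A) = 0).
set K := kermx A.
have KPD : K *m adjmx P *m diag_mx D = 0.
  have -> : K *m adjmx P *m diag_mx D = K *m A *m adjmx P.
    rewrite [in K *m A]spectral_decomposition !mulmxA -(mulmxA _ P).
    by rewrite spectral_mulmx_adj mulmx1.
  by rewrite mulmx_ker mul0mx.
rewrite -[row i P]adjmxK -adjmxM.
suff -> : K *m adjmx (row i P) = 0 by rewrite adjmx0.
have -> : adjmx (row i P) = col i (adjmx P) by rewrite /adjmx tr_row map_col.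
rewrite colE mulmxA -colE.
apply/matrixP => a b; rewrite [LHS]mxE [RHS]mxE.
have := congr1 (fun M : 'M[C]_n => M a i) KPD.
rewrite mul_mx_diag [LHS]mxE [RHS]mxE => /eqP.
by rewrite mulf_eq0 => /orP [/eqP|/eqP].
Qed.

End FunctionalCalculus.

Definition sqrtmx (C : numClosedFieldType) n (A : 'M[C]_n) : 'M[C]_n := mxfun sqrtC A.

Section PsdCalculus.
Variables (C : numClosedFieldType) (n : nat) (A : 'M[C]_n).
Hypothesis psdA : psdmx A.
Let normalA : A \is normalmx := psd_normal psdA.
Let spectral_ge0 := psd_spectral_ge0 normalA psdA.
Local Notation B := (mp_invsqrt A).
Local Notation S := (sqrtmx A).
Local Notation Pi := (ker_proj A).

Lemma psd_gram_decomp : exists G : 'M[C]_n, A = adjmx G *m G.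
Proof.
exists (diag_mx (map_mx sqrtC (spectral_diag A)) *m spectralmx A).
rewrite -mxfun_gram -{1}(mxfun_id normalA); apply: eq_mxfun => i.
by rewrite conj_Creal ?sqrtC_real ?spectral_ge0 // -expr2 sqrtCK.
Qed.

Lemma sqrtmx_herm : adjmx S = S.
Proof.
rewrite adjmx_mxfun; apply: eq_mxfun => i.
by rewrite conj_Creal ?sqrtC_real ?spectral_ge0.
Qed.

Lemma mp_invsqrt_herm : adjmx B = B.
Proof.
rewrite adjmx_mxfun; apply: eq_mxfun => i.
by case: eqP => _; rewrite ?conjC0 ?conj_Creal ?rpredV ?sqrtC_real ?spectral_ge0.
Qed.

Lemma sqrtmxK : S *m S = A.
Proof.
rewrite mxfunM -[RHS](mxfun_id normalA); apply: eq_mxfun => i.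
by rewrite -expr2 sqrtCK.
Qed.

Lemma ker_proj_compl : 1%:M - Pi = mxfun (fun x => (x != 0)%:R) A.
Proof.
apply/eqP; rewrite subr_eq; apply/eqP.
rewrite (ker_projE normalA) -mxfunD -(mxfun_cst A); apply: eq_mxfun => i.
by case: (_ == 0); rewrite ?add0r ?addr0.
Qed.

Lemma mp_invsqrt_conj : B *m A *m B = 1%:M - Pi.
Proof.
rewrite ker_proj_compl -{2}(mxfun_id normalA) !mxfunM; apply: eq_mxfun => i.
move: (spectral_diag A 0 i) => x; case: eqP => [-> | /eqP x_neq0].
  by rewrite !mul0r.
have s_neq0 : sqrtC x != 0 by rewrite sqrtC_eq0.
by rewrite -{2}[x]sqrtCK expr2 mulrA mulVf // mul1r mulfV.
Qed.

Lemma mp_invsqrt_sqrtmx : B *m S = 1%:M - Pi.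
Proof.
rewrite ker_proj_compl mxfunM; apply: eq_mxfun => i.
move: (spectral_diag A 0 i) => x; case: eqP => [-> | /eqP x_neq0].
  by rewrite mul0r.
by rewrite mulVf // sqrtC_eq0.
Qed.

Lemma sqrtmx_mp_invsqrt : S *m B = 1%:M - Pi.
Proof.
rewrite ker_proj_compl mxfunM; apply: eq_mxfun => i.
move: (spectral_diag A 0 i) => x; case: eqP => [-> | /eqP x_neq0].
  by rewrite mulr0.
by rewrite mulfV // sqrtC_eq0.
Qed.

Lemma sqrtmx_ker_proj : S *m Pi = 0.
Proof.
rewrite (ker_projE normalA) mxfunM -(mxfun0 A); apply: eq_mxfun => i.
by case: eqP => [->|_]; rewrite ?sqrtC0 ?mul0r ?mulr0.
Qed.

Lemma ker_proj_mul : Pi *m A = 0.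
Proof.
rewrite (ker_projE normalA) -{2}(mxfun_id normalA) mxfunM -(mxfun0 A).
by apply: eq_mxfun => i; case: eqP => [->|_]; rewrite ?mulr0 ?mul0r.
Qed.

Lemma psd_ker_proj : psdmx Pi.
Proof.
rewrite (ker_projE normalA) (@eq_mxfun _ _ _ _ (fun x => ((x == 0)%:R)^* * (x == 0)%:R)).
  by rewrite mxfun_gram; apply: psd_gram.
by move=> i; case: eqP => _; rewrite ?conjC1 ?conjC0 ?mulr1 ?mulr0.
Qed.

End PsdCalculus.

Section Gram.
Variables (C : numClosedFieldType) (d : nat).

Lemma trace_mul_gram m (G : 'M[C]_(m, d)) (Y : 'M[C]_d) :
  \tr (Y *m (adjmx G *m G)) = \sum_k (row k G *m Y *m adjmx (row k G)) 0 0.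
Proof.
rewrite mulmxA mxtrace_mulC mulmxA /mxtrace; apply: eq_bigr => k _.
by rewrite -(form_delta (G *m Y *m adjmx G) k k) !rowE adjmxM !mulmxA.
Qed.

Lemma gram_sum_row m (G : 'M[C]_(m, d)) :
  adjmx G *m G = \sum_k adjmx (row k G) *m row k G.
Proof.
apply/matrixP => a b; rewrite summxE !mxE; apply: eq_bigr => k _.
by rewrite !mxE big_ord1 !mxE.
Qed.

Lemma psd_trace_mul (P Q : 'M[C]_d) : psdmx P -> psdmx Q -> 0 <= \tr (P *m Q).
Proof.
move=> psdP /psd_gram_decomp [G ->]; rewrite trace_mul_gram.
by apply: sumr_ge0 => k _; apply: psdP.
Qed.

End Gram.

Section CompletePositivity.
Variables (C : numClosedFieldType) (d : nat).
Implicit Types (L : 'M[C]_d -> 'M[C]_d) (X P Q : 'M[C]_d).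

Lemma eq_cp L1 L2 : L1 =1 L2 -> completely_positive L1 -> completely_positive L2.
Proof.
move=> L12 cp1 m X psdX v; have := cp1 m X psdX v; congr (_ <= _).
by apply: eq_bigr => i _; apply: eq_bigr => j _; rewrite L12.
Qed.

Lemma cp_psd L X : completely_positive L -> psdmx X -> psdmx (L X).
Proof.
move=> cpL psdX v.
have := cpL 1%N (fun _ _ => X) _ (fun=> v); rewrite !big_ord1; apply.
by move=> w; rewrite !big_ord1.
Qed.

Lemma cp_conj (K : 'M[C]_d) : completely_positive (fun X => K *m X *m adjmx K).
Proof.
move=> m X psdX v; have := psdX (fun i => v i *m K); congr (_ <= _).
by apply: eq_bigr => i _; apply: eq_bigr => j _; rewrite adjmxM !mulmxA.
Qed.

Lemma cp_comp L1 L2 : completely_positive L1 -> completely_positive L2 ->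
  completely_positive (fun X => L1 (L2 X)).
Proof. by move=> cp1 cp2 m X /cp2/cp1. Qed.

Lemma cp_add L1 L2 : completely_positive L1 -> completely_positive L2 ->
  completely_positive (fun X => L1 X + L2 X).
Proof.
move=> cp1 cp2 m X psdX v; have := addr_ge0 (cp1 m X psdX v) (cp2 m X psdX v).
rewrite -big_split; congr (_ <= _); apply: eq_bigr => i _; rewrite -big_split /=.
by apply: eq_bigr => j _; rewrite mulmxDr mulmxDl [RHS]mxE.
Qed.

Lemma cp_sum I (r : seq I) (F : I -> 'M[C]_d -> 'M[C]_d) :
  (forall k, completely_positive (F k)) ->
  completely_positive (fun X => \sum_(k <- r) F k X).
Proof.
move=> cpF; elim: r => [|k r IHr].
  move=> m X _ v; rewrite big1 // => i _; rewrite big1 // => j _.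
  by rewrite big_nil mulmx0 mul0mx mxE.
by apply: (eq_cp _ (cp_add (cpF k) IHr)) => X; rewrite big_cons.
Qed.

(* tr[X G0† G0] G† G = Σ_kl K_kl X K_kl† with K_kl = g_l† r_k, where r_k and g_l
   are the rows of G0 and G *)
Lemma cp_trace_scale P Q : psdmx P -> psdmx Q ->
  completely_positive (fun X => \tr (X *m P) *: Q).
Proof.
move=> /psd_gram_decomp [G0 ->] /psd_gram_decomp [G ->].
pose K k l := adjmx (row l G) *m row k G0.
apply: (@eq_cp (fun X => \sum_(k < d) \sum_(l < d) K k l *m X *m adjmx (K k l))).
  move=> X; rewrite trace_mul_gram gram_sum_row scaler_suml; apply: eq_bigr => k _.
  rewrite scaler_sumr; apply: eq_bigr => l _.
  rewrite /K adjmxM adjmxK; set r := row k G0; set g := row l G.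
  have -> : adjmx g *m r *m X *m (adjmx r *m g) = adjmx g *m (r *m X *m adjmx r) *m g.
    by rewrite !mulmxA.
  by rewrite [in LHS](mx11_scalar (r *m X *m adjmx r)) mul_mx_scalar -scalemxAl.
by apply: cp_sum => k; apply: cp_sum => l; apply: cp_conj.
Qed.

Lemma psd_block_gram n (K : 'M[C]_d) (W : 'I_n -> 'M[C]_d) :
  psdmx K -> psd_block (fun i j => adjmx (W i) *m K *m W j).
Proof.
move=> psdK v; have := psdK (\sum_(i < n) v i *m adjmx (W i)); congr (_ <= _).
rewrite adjmx_sum mulmx_suml mulmx_suml summxE; apply: eq_bigr => i _.
rewrite mulmx_sumr summxE; apply: eq_bigr => j _.
by rewrite adjmxM adjmxK !mulmxA.
Qed.

Lemma psd_block2_offdiag (X : 'I_2 -> 'I_2 -> 'M[C]_d) :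
  psd_block X -> X ord0 ord0 = 0 -> X ord0 ord_max = 0 /\ X ord_max ord0 = 0.
Proof.
move=> psdX X00.
have offdiag0 (w u : 'rV[C]_d) : (w *m X ord0 ord_max *m adjmx u) 0 0 = 0 /\
                                 (u *m X ord_max ord0 *m adjmx w) 0 0 = 0.
  apply: (@sesqui_affine_ge0 _ ((u *m X ord_max ord_max *m adjmx u) 0 0)) => s.
  have := psdX (fun i : 'I_2 => if i == ord0 then s *: w else u).
  rewrite !big_ord_recl !big_ord0 !addr0.
  have -> : lift ord0 (@ord0 0) = ord_max :> 'I_2 by apply: val_inj.
  rewrite eqxx /= X00 mulmx0 mul0mx mxE add0r adjmxZ -!scalemxAl -!scalemxAr !mxE.
  by move/le_trans; apply; rewrite le_eqVlt; apply/orP; left; apply/eqP; ring.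
by split; apply: form_eq0 => w u; [case: (offdiag0 w u) | case: (offdiag0 u w)].
Qed.

(* the block matrix [[P, P Y], [Y† P, Y† P Y]] is positive and L kills its corner P *)
Lemma cp_eq0_mul L P (Y : 'M[C]_d) :
  completely_positive L -> psdmx P -> L P = 0 ->
  L (P *m Y) = 0 /\ L (adjmx Y *m P) = 0.
Proof.
move=> cpL psdP LP0.
pose W (i : 'I_2) : 'M[C]_d := if i == ord0 then 1%:M else Y.
have := psd_block2_offdiag (cpL 2%N _ (psd_block_gram W psdP)).
by rewrite /W /= adjmx1 mul1mx !mulmx1; apply.
Qed.

End CompletePositivity.

Section LinearMap.
Variables (C : numClosedFieldType) (d : nat) (L : 'M[C]_d -> 'M[C]_d).
Hypothesis linL : linmap L.

Lemma linmapD X Y : L (X + Y) = L X + L Y.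
Proof. by have := linL 1 X Y; rewrite !scale1r. Qed.

Lemma linmap0 : L 0 = 0.
Proof. by apply: (@addrI _ (L 0)); rewrite -linmapD !addr0. Qed.

Lemma linmapZ a X : L (a *: X) = a *: L X.
Proof. by have := linL a X 0; rewrite !addr0 linmap0 addr0. Qed.

Lemma linmapB X Y : L (X - Y) = L X - L Y.
Proof. by rewrite -scaleN1r linmapD linmapZ scaleN1r. Qed.

End LinearMap.

Section QuantumOperation.
Variables (C : numClosedFieldType) (d : nat) (L Ld : 'M[C]_d -> 'M[C]_d).
Hypotheses (linL : linmap L) (cpL : completely_positive L) (dualL : is_dual L Ld).
Local Notation A := (Ld 1%:M).
Local Notation B := (mp_invsqrt A).
Local Notation Pi := (ker_proj A).

Lemma trace_dual X : \tr (L X) = \tr (X *m A).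
Proof. by rewrite -dualL mulmx1. Qed.

Lemma psd_dual1 : psdmx A.
Proof.
move=> v; rewrite -trace_mx11 mxtrace_mulC mulmxA -trace_dual.
exact/psd_trace_ge0/(cp_psd cpL)/psd_gram.
Qed.

Lemma Phi_linmap xi : linmap (Phi L Ld xi).
Proof.
move=> a X Y; rewrite /Phi.
have -> : B *m (a *: X + Y) *m B = a *: (B *m X *m B) + B *m Y *m B.
  by rewrite mulmxDr mulmxDl -scalemxAr -scalemxAl.
rewrite linL mulmxDl -scalemxAl mxtraceD mxtraceZ scalerDl -scalerA.
by rewrite scalerDr addrACA.
Qed.

Lemma Phi_trace xi X : \tr xi = 1 -> \tr (Phi L Ld xi X) = \tr X.
Proof.
move=> tr_xi; rewrite /Phi mxtraceD mxtraceZ tr_xi mulr1 trace_dual.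
have -> : \tr (B *m X *m B *m A) = \tr (X *m (B *m A *m B)).
  by move: B => M; rewrite -!mulmxA mxtrace_mulC !mulmxA.
by rewrite (mp_invsqrt_conj psd_dual1) -mxtraceD -mulmxDr subrK mulmx1.
Qed.

Lemma Phi_cp xi : psdmx xi -> completely_positive (Phi L Ld xi).
Proof.
move=> psd_xi.
have cp_sum_form : completely_positive
    (fun X => L (B *m X *m adjmx B) + \tr (X *m Pi) *: xi).
  exact: cp_add (cp_comp cpL (cp_conj B)) (cp_trace_scale (psd_ker_proj psd_dual1) psd_xi).
by apply: eq_cp cp_sum_form => X; rewrite (mp_invsqrt_herm psd_dual1).
Qed.

Lemma Phi_channel xi : psdmx xi -> \tr xi = 1 -> quantum_channel (Phi L Ld xi).
Proof.
move=> psd_xi tr_xi.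
by split=> [||X]; [apply: Phi_linmap | apply: Phi_cp | apply: Phi_trace].
Qed.

Lemma qop_ker_proj_eq0 : L Pi = 0.
Proof.
apply: psd_trace_eq0; first exact: cp_psd cpL (psd_ker_proj psd_dual1).
by rewrite trace_dual (ker_proj_mul psd_dual1) mxtrace0.
Qed.

Lemma qop_compress X : L ((1%:M - Pi) *m X *m (1%:M - Pi)) = L X.
Proof.
have [LPiX _] :=
  cp_eq0_mul (X *m (1%:M - Pi)) cpL (psd_ker_proj psd_dual1) qop_ker_proj_eq0.
have [_ LXPi] := cp_eq0_mul (adjmx X) cpL (psd_ker_proj psd_dual1) qop_ker_proj_eq0.
rewrite adjmxK in LXPi.
have -> : (1%:M - Pi) *m X *m (1%:M - Pi) = X - X *m Pi - Pi *m (X *m (1%:M - Pi)).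
  by move: Pi => P; rewrite !mulmxBl !mulmxBr !mul1mx !mulmx1 !mulmxA.
by rewrite (linmapB linL) (linmapB linL) LPiX LXPi !subr0.
Qed.

Lemma Phi_sqrtmx xi X : Phi L Ld xi (sqrtmx A *m X *m sqrtmx A) = L X.
Proof.
rewrite /Phi -(mulmxA (sqrtmx A *m X)) (sqrtmx_ker_proj psd_dual1).
have -> : B *m (sqrtmx A *m X *m sqrtmx A) *m B = B *m sqrtmx A *m X *m (sqrtmx A *m B).
  by move: B (sqrtmx A) => M N; rewrite !mulmxA.
rewrite (mp_invsqrt_sqrtmx psd_dual1) (sqrtmx_mp_invsqrt psd_dual1) qop_compress.
by rewrite mulmx0 mxtrace0 scale0r addr0.
Qed.

Lemma Phi_normalized rho2 X :
  Phi L Ld (normalized L rho2) X =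
  L (B *m X *m B + (\tr (X *m Pi) / \tr (L rho2)) *: rho2).
Proof. by rewrite /Phi /normalized [RHS](linmapD linL) (linmapZ linL) scalerA. Qed.

Lemma normalized_psd rho : psdmx rho -> psdmx (normalized L rho).
Proof.
move=> psd_rho; have psdL := cp_psd cpL psd_rho.
by apply: (psdZ _ psdL); rewrite invr_ge0 psd_trace_ge0.
Qed.

Lemma normalized_trace rho : \tr (L rho) != 0 -> \tr (normalized L rho) = 1.
Proof. by move=> tr_nz; rewrite mxtraceZ mulVf. Qed.

Lemma normalizedZ c rho : c != 0 -> normalized L (c *: rho) = normalized L rho.
Proof.
move=> c_nz; rewrite /normalized (linmapZ linL) mxtraceZ scalerA invfM mulrAC.
by rewrite mulVf // mul1r.
Qed.

Lemma normalized_image_psd M : psdmx M -> \tr (L M) != 0 ->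
  normalized_image L (normalized L M).
Proof.
move=> psdM trLM_nz.
have trM_nz : \tr M != 0.
  by apply: contraNneq trLM_nz => /(psd_trace_eq0 psdM) ->; rewrite (linmap0 linL) mxtrace0.
exists ((\tr M)^-1 *: M); split; last by rewrite normalizedZ ?invr_eq0.
- by split; [apply: (psdZ _ psdM); rewrite invr_ge0 psd_trace_ge0 | rewrite mxtraceZ mulVf].
- by rewrite (linmapZ linL) mxtraceZ mulf_neq0 ?invr_eq0.
Qed.

Lemma normalized_image_Phi xi sigma : normalized_image L sigma ->
  exists rho, density rho /\ sigma = Phi L Ld xi rho.
Proof.
move=> [rho [[psd_rho tr_rho] trL_nz ->]].
exists ((\tr (L rho))^-1 *: (sqrtmx A *m rho *m sqrtmx A)); split.
  split.
    apply: psdZ; first by rewrite invr_ge0 (psd_trace_ge0 (cp_psd cpL psd_rho)).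
    by rewrite -[X in _ *m X](sqrtmx_herm psd_dual1); apply: psd_conj.
  rewrite mxtraceZ -mulmxA mxtrace_mulC -mulmxA (sqrtmxK psd_dual1) -trace_dual.
  by rewrite mulVf.
by rewrite (linmapZ (Phi_linmap _)) Phi_sqrtmx.
Qed.

Lemma Phi_normalized_image rho2 rho : psdmx rho2 -> \tr (L rho2) != 0 ->
  density rho -> normalized_image L (Phi L Ld (normalized L rho2) rho).
Proof.
move=> psd2 trL2_nz [psd_rho tr_rho].
rewrite Phi_normalized.
set M := _ + _.
have trLM : \tr (L M) = 1.
  by rewrite -Phi_normalized Phi_trace ?normalized_trace.
have -> : L M = normalized L M by rewrite /normalized trLM invr1 scale1r.
apply: normalized_image_psd; last by rewrite trLM oner_neq0.
apply: psdD.
  by rewrite -[X in _ *m X](mp_invsqrt_herm psd_dual1); apply: psd_conj.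
apply: (psdZ _ psd2); apply: divr_ge0.
  exact: psd_trace_mul psd_rho (psd_ker_proj psd_dual1).
exact: psd_trace_ge0 (cp_psd cpL psd2).
Qed.

End QuantumOperation.

Theorem proposition2 (C : numClosedFieldType) (d : nat) (hd : (1 < d)%N)
  (L Ld : 'M[C]_d -> 'M[C]_d) (xi : 'M[C]_d) :
  quantum_operation L Ld ->
  Ld 1%:M != 0 ->
  normalized_image L xi ->
  quantum_channel (Phi L Ld xi) /\
  (forall sigma : 'M[C]_d,
     normalized_image L sigma <->
     exists rho : 'M[C]_d, density rho /\ sigma = Phi L Ld xi rho).
Proof.
move=> [linL cpL dualL _] _ [rho2 [[psd2 _] trL2_nz ->]].
have psd_xi := normalized_psd cpL psd2.
split; first exact: (Phi_channel linL cpL dualL psd_xi (normalized_trace trL2_nz)).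
move=> sigma; split; first exact: normalized_image_Phi.
by move=> [rho [rho_density ->]]; apply: Phi_normalized_image.
Qed.
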